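(* Let $N\ge1$. The composition of $\psi$ (restricted to $\bar\Gamma(2)_2=[\bar\Gamma(2),\bar\Gamma(2)]$) with reduction $\mathbb{Z}^3\to(\mathbb{Z}/N'\mathbb{Z})^3$ extends to a group homomorphism $\bar\psi:\Phi_N\to(\mathbb{Z}/N'\mathbb{Z})^3$ which vanishes on $A^N$ and $B^N$ and satisfies, for $\gamma\in\bar\Gamma(2)$ and $\delta\in\Phi_N$, $$\bar\psi(\gamma\delta\gamma^{-1})=(-\bar\phi_1(\gamma)\bar\phi_2(\delta),0)+\bar\psi(\delta).$$ In particular, for $i,j,k\in\mathbb{Z}$, $\bar\psi(A^iB^jC^kB^{-j}A^{-i})=(-ik,-jk,k)$.
   Context: Let $\bar\Gamma(2)=\Gamma(2)/\{\pm1\}\subset\mathrm{PSL}_2(\mathbb{Z})$, freely generated by the classes $A$ of $\begin{pmatrix}1&2\\0&1\end{pmatrix}$ and $B$ of $\begin{pmatrix}1&0\\2&1\end{pmatrix}$; $[g,h]=ghg^{-1}h^{-1}$, $C=[A,B]$; $\bar\Gamma(2)_1=\bar\Gamma(2)$, $\bar\Gamma(2)_{k+1}=[\bar\Gamma(2)_k,\bar\Gamma(2)]$. Let $\psi:\bar\Gamma(2)_2\to\mathbb{Z}^3$ be the homomorphism with kernel $\bar\Gamma(2)_4$ inducing the isomorphism $\bar\Gamma(2)_2/\bar\Gamma(2)_4\cong\mathbb{Z}^3$ that sends $C\mapsto(0,0,1)$, $[C,A]\mapsto(1,0,0)$, $[C,B]\mapsto(0,1,0)$. Set $N'=N$ if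 $N$ is odd and $N'=N/2$ if $N$ is even. $\Phi_N$ is the kernel of $\bar\phi_1:\bar\Gamma(2)\to(\mathbb{Z}/N\mathbb{Z})^2$, $A\mapsto(1,0)$, $B\mapsto(0,1)$. $\bar\phi_2:\Phi_N\to\mathbb{Z}/N'\mathbb{Z}$ is the homomorphism vanishing on $A^N$ and $B^N$ and taking the value $1$ on each $A^iB^jCB^{-j}A^{-i}$ ($i,j\in\mathbb{Z}$). The product $\bar\phi_1(\gamma)\bar\phi_2(\delta)$ is computed in $(\mathbb{Z}/N'\mathbb{Z})^2$ (using $N'\mid N$), and $(v,0)$ denotes the element of $(\mathbb{Z}/N'\mathbb{Z})^3$ with first two coordinates $v$ and last coordinate $0$. *)

(* Gamma-bar(2) is realized concretely inside PSL_2(Z):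
   an element of PSL_2(Z) congruent to the identity mod 2 has an odd (hence
   nonzero) upper-left entry, so we represent its class by the unique lift
   M in SL_2(Z) with M 0 0 > 0.  The group law is matrix product followed by
   this sign normalization. *)
From mathcomp Require Import all_boot all_order all_algebra.
Set Implicit Arguments. Unset Strict Implicit. Unset Printing Implicit Defensive.
Import Order.TTheory GRing.Theory Num.Theory.
Local Open Scope ring_scope.

Definition mat := 'M[int]_2.

Definition i0 : 'I_2 := ord0.
Definition i1 : 'I_2 := ord_max.

Definition normalize (M : mat) : mat := if M i0 i0 < 0 then - M else M.

Definition gmul (M N : mat) : mat := normalize (M *m N).
Definition ginv (M : mat) : mat := normalize (\adj M).
Definition gone : mat := 1%:M.

Definition inG (M : mat) : Prop :=
  \det M = 1 /\ (forall i j : 'I_2, (M i j = (i == j)%:R %[mod 2])%Z) /\ 0 < M i0 i0.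

Definition Am : mat := \matrix_(i, j) ((i == j)%:R + ((i == i0) && (j == i1))%:R * 2).
Definition Bm : mat := \matrix_(i, j) ((i == j)%:R + ((i == i1) && (j == i0))%:R * 2).

Definition comm (g h : mat) : mat := gmul (gmul (gmul g h) (ginv g)) (ginv h).
Definition Cm : mat := comm Am Bm.

Definition gpow (g : mat) (k : int) : mat :=
  match k with
  | Posz n => iter n (gmul g) gone
  | Negz n => iter n.+1 (gmul (ginv g)) gone
  end.

Inductive gen (S : mat -> Prop) : mat -> Prop :=
  | gen_in x : S x -> gen S x
  | gen_one : gen S gone
  | gen_mul x y : gen S x -> gen S y -> gen S (gmul x y)
  | gen_inv x : gen S x -> gen S (ginv x).

(* lcs k = Gamma-bar(2)_{k+1} *)
Fixpoint lcs (k : nat) : mat -> Prop :=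
  match k with
  | 0 => inG
  | k'.+1 => gen (fun x => exists g h, lcs k' g /\ inG h /\ x = comm g h)
  end.

Definition Gamma (k : nat) : mat -> Prop := lcs k.-1.

Definition Nprime (N : nat) : nat := if odd N then N else N./2.

Definition add2 (u v : int * int) : int * int := (u.1 + v.1, u.2 + v.2).
Definition add3 (u v : int * int * int) : int * int * int :=
  (u.1.1 + v.1.1, u.1.2 + v.1.2, u.2 + v.2).

Definition eqm (n : nat) (x y : int) : Prop := (x = y %[mod n%:Z])%Z.
Definition eq2m (n : nat) (u v : int * int) : Prop := eqm n u.1 v.1 /\ eqm n u.2 v.2.
Definition eq3m (n : nat) (u v : int * int * int) : Prop :=
  eqm n u.1.1 v.1.1 /\ eqm n u.1.2 v.1.2 /\ eqm n u.2 v.2.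

Definition PhiN (N : nat) (phi1 : mat -> int * int) (x : mat) : Prop :=
  inG x /\ eq2m N (phi1 x) (0, 0).

From HB Require Import structures.
From Pilot Require Import Defs.
From mathcomp Require Import all_boot all_order all_algebra zify ring.
Import Order.TTheory GRing.Theory Num.Theory.
Set Implicit Arguments. Unset Strict Implicit. Unset Printing Implicit Defensive.
Local Open Scope ring_scope.

Lemma int_ind_pm1 (P : int -> Prop) :
  P 0 -> (forall n, P n -> P (n + 1)) -> (forall n, P n -> P (n - 1)) ->
  forall n, P n.
Proof.
move=> P0 PS PP [] k; elim: k => [|k IHk] //.
- by have := PS _ IHk; rewrite -addn1.
- by have := PP _ P0.
- by have := PP _ IHk; rewrite !NegzE -opprD -PoszD addn1.
Qed.

Section GroupFacts.
Variable G : groupType.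
Implicit Types x y z g h : G.
Local Open Scope group_scope.

Definition gcomm x y := x * y * x^-1 * y^-1.

Lemma gcommV x y : (gcomm x y)^-1 = gcomm y x.
Proof. by rewrite /gcomm !gnorm. Qed.

Lemma gcommMl x y z : gcomm (x * y) z = x * gcomm y z * x^-1 * gcomm x z.
Proof. by rewrite /gcomm !gnorm. Qed.

Lemma gcommMr x y z : gcomm x (y * z) = gcomm x y * (y * gcomm x z * y^-1).
Proof. by rewrite /gcomm !gnorm. Qed.

Lemma gcommVl x y : gcomm x^-1 y = x^-1 * (gcomm x y)^-1 * x^-1^-1.
Proof. by rewrite /gcomm !gnorm. Qed.

Lemma gcommVr x y : gcomm x y^-1 = y^-1 * (gcomm x y)^-1 * y^-1^-1.
Proof. by rewrite /gcomm !gnorm. Qed.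

Lemma conjg_gcomm g x y :
  g * gcomm x y * g^-1 = gcomm (g * x * g^-1) (g * y * g^-1).
Proof. by rewrite /gcomm !gnorm. Qed.

Lemma conjg_gcommE g x : g * x * g^-1 = gcomm g x * x.
Proof. by rewrite /gcomm !gnorm. Qed.

Lemma gcommg1 x : gcomm x 1 = 1. Proof. by rewrite /gcomm !gnorm. Qed.
Lemma gcomm1g x : gcomm 1 x = 1. Proof. by rewrite /gcomm !gnorm. Qed.
Lemma gcommgg x : gcomm x x = 1. Proof. by rewrite /gcomm !gnorm. Qed.

Lemma gcomm_commute x y : commute x y -> gcomm x y = 1.
Proof. by rewrite /gcomm => ->; rewrite !gnorm. Qed.


Inductive genG (S : G -> Prop) : G -> Prop :=
  | genG_in x : S x -> genG S x
  | genG_one : genG S 1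
  | genG_mul x y : genG S x -> genG S y -> genG S (x * y)
  | genG_inv x : genG S x -> genG S x^-1.

Lemma genG_conj (S : G -> Prop) :
    (forall g x, S x -> genG S (g * x * g^-1)) ->
  forall g x, genG S x -> genG S (g * x * g^-1).
Proof.
move=> SJ g x; elim=> {x} [x /SJ //||x y _ Sx _ Sy|x _ Sx].
- by rewrite mulg1 mulgV; apply: genG_one.
- have -> : g * (x * y) * g^-1 = (g * x * g^-1) * (g * y * g^-1) by rewrite !gnorm.
  exact: genG_mul.
- have -> : g * x^-1 * g^-1 = (g * x * g^-1)^-1 by rewrite !gnorm.
  exact: genG_inv.
Qed.

(* [lcsg k] is the (k+1)-st term of the lower central series, as [lcs k] in Defs. *)
Fixpoint lcsg (k : nat) : G -> Prop :=
  if k is k'.+1 then genG (fun x => exists g h, lcsg k' g /\ x = gcomm g h)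
  else fun _ => True.

Lemma lcsg0 x : lcsg 0 x.
Proof. by []. Qed.

Lemma lcsg1 k : lcsg k 1.
Proof. by case: k => [|k] //; apply: genG_one. Qed.

Lemma lcsgM k x y : lcsg k x -> lcsg k y -> lcsg k (x * y).
Proof. by case: k => [|k] // ; apply: genG_mul. Qed.

Lemma lcsgV k x : lcsg k x -> lcsg k x^-1.
Proof. by case: k => [|k] //; apply: genG_inv. Qed.

Lemma lcsg_comml k x y : lcsg k x -> lcsg k.+1 (gcomm x y).
Proof. by move=> kx; apply: genG_in; exists x, y. Qed.

Lemma lcsg_commr k x y : lcsg k x -> lcsg k.+1 (gcomm y x).
Proof. by move=> kx; rewrite -gcommV; apply/lcsgV/lcsg_comml. Qed.

Lemma lcsg_conj k g x : lcsg k x -> lcsg k (g * x * g^-1).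
Proof.
elim: k g x => [//|k IHk]; apply: genG_conj => g _ [x [y [kx ->]]].
by rewrite conjg_gcomm; apply/lcsg_comml/IHk.
Qed.

Lemma lcsgS k x : lcsg k.+1 x -> lcsg k x.
Proof.
elim: k x => [//|k IHk] x; elim=> {x} [_ [x [y [kx ->]]]|||].
- exact/lcsg_comml/IHk.
- exact: lcsg1.
- by move=> x y _ kx _ ky; apply: lcsgM.
- by move=> x _ kx; apply: lcsgV.
Qed.

Definition expgz x (n : int) : G :=
  match n with Posz k => x ^+ k | Negz k => x ^- k.+1 end.

Lemma expgz0 x : expgz x 0 = 1. Proof. by []. Qed.
Lemma expgz1 x : expgz x 1 = x. Proof. by []. Qed.

Lemma expgzS x n : expgz x (n + 1) = expgz x n * x.
Proof.
case: n => [k|[|k]].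
- by rewrite -PoszD addn1 /= expgSr.
- by rewrite /= expg1 mulVg.
- have -> : Negz k.+1 + 1 = Negz k by rewrite !NegzE -addn1 PoszD opprD addrNK.
  by rewrite /= [x ^+ k.+2]expgS invgM mulgVK.
Qed.

Lemma expgzB1 x n : expgz x (n - 1) = expgz x n * x^-1.
Proof. by rewrite -{2}(subrK 1%R n) expgzS mulgK. Qed.

Lemma expgzD x m n : expgz x (m + n) = expgz x m * expgz x n.
Proof.
elim/int_ind_pm1: n => [|n IHn|n IHn]; first by rewrite addr0 mulg1.
- by rewrite addrA !expgzS IHn mulgA.
- by rewrite addrA !expgzB1 IHn mulgA.
Qed.

Lemma expgzN x n : expgz x (- n) = (expgz x n)^-1.
Proof. by apply/esym/mulg1_eq; rewrite -expgzD subrr. Qed.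

Lemma expgzMr x m n : expgz x (m * n) = expgz (expgz x n) m.
Proof.
elim/int_ind_pm1: m => [|m IHm|m IHm]; first by rewrite mul0r.
- by rewrite mulrDl mul1r expgzS expgzD IHm.
- by rewrite mulrBl mul1r expgzB1 expgzD expgzN IHm.
Qed.

Lemma commute_expgz x n : commute (expgz x n) x.
Proof. by rewrite /commute -expgzS addrC expgzD. Qed.

Lemma expgz_closed (P : G -> Prop) :
    P 1 -> (forall x y, P x -> P y -> P (x * y)) -> (forall x, P x -> P x^-1) ->
  forall x n, P x -> P (expgz x n).
Proof.
move=> P1 PM PV x n Px; elim/int_ind_pm1: n => [//|n|n] Pn.
- by rewrite expgzS; apply: PM.
- by rewrite expgzB1; apply/PM/PV.
Qed.

End GroupFacts.

Arguments lcsg {G} k _ : simpl never.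

Lemma int3_ext (u v : int * int * int) :
  u.1.1 = v.1.1 -> u.1.2 = v.1.2 -> u.2 = v.2 -> u = v.
Proof. by case: u v => [[? ?] ?] [[? ?] ?] /= -> -> ->. Qed.

Definition pad (v : int * int) (e : int) : int * int * int := (v.1 * e, v.2 * e, 0).

Lemma eqz_modP (n x y : int) : (x = y %[mod n])%Z <-> (n %| x - y)%Z.
Proof. by rewrite -eqz_mod_dvd; split=> [->|/eqP]. Qed.

Definition dvdz3 (d : int) : {pred int * int * int} :=
  fun u => [&& (d %| u.1.1)%Z, (d %| u.1.2)%Z & (d %| u.2)%Z].

Fact dvdz3_zmod_closed d : zmod_closed (dvdz3 d).
Proof.
split=> [|u v /and3P[u1 u2 u3] /and3P[v1 v2 v3]]; first exact/and3P.
by apply/and3P; split; rewrite /= rpredB.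
Qed.

HB.instance Definition _ d := GRing.isZmodClosed.Build (int * int * int)%type (dvdz3 d)
  (dvdz3_zmod_closed d).

Lemma eq3mP n u v : eq3m n u v <-> u - v \in dvdz3 n.
Proof.
rewrite /eq3m /eqm !eqz_modP; split=> [[? [? ?]]|/and3P[? ? ?]] //.
by apply/and3P.
Qed.

Lemma pad_dvdz3 d v e : (d %| e)%Z -> pad v e \in dvdz3 d.
Proof. by move=> de; apply/and3P; rewrite /= !dvdz_mull ?dvdz0. Qed.

Lemma pad_dvdz3l d v e : (d %| v.1)%Z -> (d %| v.2)%Z -> pad v e \in dvdz3 d.
Proof. by move=> d1 d2; apply/and3P; rewrite /= !dvdz_mulr ?dvdz0. Qed.

Lemma Nprime_dvdz N : ((Nprime N)%:Z %| N%:Z)%Z.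
Proof.
rewrite dvdzE /= /Nprime; case: ifP => // /negbT evenN.
by rewrite -{2}(odd_double_half N) (negbTE evenN) add0n -muln2 dvdn_mulr.
Qed.

Lemma pad_dvdz3B (N : nat) v w e e' : eq2m N v w -> eqm (Nprime N) e e' ->
  pad v e - pad w e' \in dvdz3 (Nprime N).
Proof.
move=> [/eqz_modP v1 /eqz_modP v2] /eqz_modP ee'; apply/and3P.
have NpN := Nprime_dvdz N.
have key i j : (N %| i - j)%Z -> (Nprime N %| i * e - j * e')%Z.
  move=> ij; have -> : i * e - j * e' = (i - j) * e + j * (e - e') by ring.
  by apply: rpredD; [apply/dvdz_mulr/(dvdz_trans NpN ij) | apply: dvdz_mull].
by rewrite /= subrr dvdz0 !key.
Qed.

(* This is the only place where N' differs from N: m (m - 1) / 2 is divisible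
   by N / 2, but not necessarily by N, when N is even and divides m. *)
Lemma dvdz_Nprime_half (N : nat) (m x y : int) :
  (N %| m)%Z -> 2 * x = m * y -> (Nprime N %| x)%Z.
Proof.
rewrite /Nprime; case: ifP => oddN Nm xE.
- have N2 : coprimez N 2 by rewrite coprimezE /= coprimen2 oddN.
  by rewrite -(Gauss_dvdzl _ N2) mulrC xE dvdz_mulr.
- case/dvdzP: Nm => k mE; apply/dvdzP; exists (k * y).
  have NE : N = (N./2 * 2)%N by rewrite -{1}(odd_double_half N) oddN add0n muln2.
  by move: xE; rewrite mE {1}NE PoszM; lia.
Qed.

Section HomMod.
Variables (G : groupType) (S : G -> Prop) (n : int) (f : G -> int).
Local Open Scope group_scope.
Hypotheses (S1 : S 1) (SM : forall x y, S x -> S y -> S (x * y)).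
Hypothesis SV : forall x, S x -> S x^-1.
Hypothesis fM : forall x y, S x -> S y -> (f (x * y) = f x + f y %[mod n])%Z.

Lemma homz_mod1 : (f 1 = 0 %[mod n])%Z.
Proof.
have /eqz_modP := fM S1 S1; rewrite mulg1 opprD addrA subrr sub0r rpredN.
by move=> f1; apply/eqz_modP; rewrite subr0.
Qed.

Lemma homz_modV x : S x -> (f x^-1 = - f x %[mod n])%Z.
Proof.
move=> Sx; have /eqz_modP := fM Sx (SV Sx); rewrite mulgV => fV.
have /eqz_modP f1 := homz_mod1; apply/eqz_modP.
have -> : f x^-1 - - f x = (f 1 - 0) - (f 1 - (f x + f x^-1)) by ring.
by rewrite rpredB.
Qed.

Lemma homz_modM3 x y z : S x -> S y -> S z ->
  (f (x * y * z) = f x + f y + f z %[mod n])%Z.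
Proof. by move=> Sx Sy Sz; have Sxy := SM Sx Sy; rewrite fM // -modzDml fM // modzDml. Qed.

Lemma homz_mod_gcomm x y : S x -> S y -> (f (gcomm x y) = 0 %[mod n])%Z.
Proof.
move=> Sx Sy; have /eqz_modP h1 := homz_modM3 (SM Sx Sy) (SV Sx) (SV Sy).
have /eqz_modP h2 := fM Sx Sy.
have /eqz_modP h3 := homz_modV Sx; have /eqz_modP h4 := homz_modV Sy.
apply/eqz_modP; rewrite /gcomm.
set u := f (_ * _ * _ * _); set v := f (x * y).
have -> : u - 0 = (u - (v + f x^-1 + f y^-1)) + (v - (f x + f y)) +
                  (f x^-1 - - f x) + (f y^-1 - - f y) by ring.
exact: rpredD (rpredD (rpredD h1 h2) h3) h4.
Qed.

Lemma homz_mod_expgz x k : S x -> (f (expgz x k) = k * f x %[mod n])%Z.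
Proof.
move=> Sx; have Sxk k' : S (expgz x k') by apply: expgz_closed.
elim/int_ind_pm1: k => [|k IHk|k IHk]; first by rewrite mul0r homz_mod1.
- by rewrite expgzS (fM (Sxk k) Sx) -modzDml IHk modzDml mulrDl mul1r.
- rewrite expgzB1 (fM (Sxk k) (SV Sx)) -modzDml IHk modzDml -modzDmr homz_modV //.
  rewrite modzDmr.
  by rewrite mulrBl mul1r.
Qed.

End HomMod.

Lemma dvdz_Nprime_recurrence (N : nat) (f : int -> int) (p q : int) :
    f 0 = 0 -> (forall m, f (m + 1) = f m + p * m + q) ->
  forall m, (N %| m)%Z -> (Nprime N %| f m)%Z.
Proof.
move=> f0 fS m Nm; apply: (dvdz_Nprime_half (y := p * (m - 1) + 2 * q) Nm).
elim/int_ind_pm1: m {Nm} => [|m IHm|m IHm]; first by rewrite f0 mulr0 mul0r.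
- by rewrite fS !mulrDr IHm; ring.
- have fP : f (m - 1) = f m - p * (m - 1) - q by rewrite -{2}(subrK 1 m) fS; ring.
  by rewrite fP !mulrBr IHm; ring.
Qed.

Lemma dvdz3_Nprime_recurrence (N : nat) (F : int -> int * int * int) (p q : int) :
    F 0 = 0 -> (forall m, F (m + 1) = F m + (p * m, q * m, 1)) ->
  forall m, (N %| m)%Z -> F m \in dvdz3 (Nprime N).
Proof.
move=> F0 FS m Nm; apply/and3P; split.
- apply: (dvdz_Nprime_recurrence (f := fun m => (F m).1.1) (p := p) (q := 0)) => //.
  + by rewrite F0.
  + by move=> k; rewrite FS addr0.
- apply: (dvdz_Nprime_recurrence (f := fun m => (F m).1.2) (p := q) (q := 0)) => //.
  + by rewrite F0.
  + by move=> k; rewrite FS addr0.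
- apply: (dvdz_Nprime_recurrence (f := fun m => (F m).2) (p := 0) (q := 1)) => //.
  + by rewrite F0.
  + by move=> k; rewrite FS mul0r addr0.
Qed.

Section TwoGenerated.
Variables (G : groupType) (a b : G).
Implicit Types x y z g h c : G.
Local Open Scope group_scope.
Local Notation C := (gcomm a b).

Hypothesis gen_ab : forall x, genG (fun y => y = a \/ y = b) x.

Lemma gen_ab_ind (P : G -> Prop) :
    P a -> P b -> P 1 -> (forall x y, P x -> P y -> P (x * y)) ->
    (forall x, P x -> P x^-1) ->
  forall x, P x.
Proof.
move=> Pa Pb P1 PM PV x.
by elim: (gen_ab x) => [y [->|->]|| y z _ Py _ Pz | y _ Py]; auto.
Qed.

Lemma lcsg1_C : lcsg 1 C. Proof. exact: lcsg_comml. Qed.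

Let nclosureC := genG (fun y => exists g, y = g * C * g^-1).

Let nclosureC_conj g x : nclosureC x -> nclosureC (g * x * g^-1).
Proof.
apply: genG_conj => {}g _ [h ->]; apply: genG_in; exists (g * h).
by rewrite !gnorm.
Qed.

Let nclosureC_gcomm x y : nclosureC (gcomm x y).
Proof.
have nC : nclosureC C by apply: genG_in; exists 1; rewrite !gnorm.
have gcomm_gen s z : s = a \/ s = b -> nclosureC (gcomm s z).
  move=> sab; elim/gen_ab_ind: z => [||| z t nz nt | z nz].
  - case: sab => ->; first by rewrite gcommgg; apply: genG_one.
    by rewrite -gcommV; apply: genG_inv.
  - by case: sab => ->; rewrite ?gcommgg //; apply: genG_one.
  - by rewrite gcommg1; apply: genG_one.
  - by rewrite gcommMr; apply: genG_mul => //; apply: nclosureC_conj.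
  - by rewrite gcommVr; apply/nclosureC_conj/genG_inv.
elim/gen_ab_ind: x y => [||| x z nx nz | x nx] y.
- by apply: gcomm_gen; left.
- by apply: gcomm_gen; right.
- by rewrite gcomm1g; apply: genG_one.
- by rewrite gcommMl; apply: genG_mul; [apply: nclosureC_conj | apply: nx].
- by rewrite gcommVl; apply/nclosureC_conj/genG_inv/nx.
Qed.

Lemma lcsg1_ind (P : G -> Prop) :
    (forall g, P (g * C * g^-1)) -> P 1 ->
    (forall x y, lcsg 1 x -> lcsg 1 y -> P x -> P y -> P (x * y)) ->
    (forall x, lcsg 1 x -> P x -> P x^-1) ->
  forall x, lcsg 1 x -> P x.
Proof.
move=> PJ P1 PM PV.
have nP x : nclosureC x -> lcsg 1 x /\ P x.
  elim=> {x} [_ [g ->]|||].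
  - by split; [apply/lcsg_conj/lcsg_comml | apply: PJ].
  - by split; [apply: lcsg1 | apply: P1].
  - by move=> x y _ [x1 Px] _ [y1 Py]; split; [apply: lcsgM | apply: PM].
  - by move=> x _ [x1 Px]; split; [apply: lcsgV | apply: PV].
move=> x x1; apply: (proj2 (nP x _)).
elim: x1 => {x} [_ [g [h [_ ->]]]|||].
- exact: nclosureC_gcomm.
- exact: genG_one.
- by move=> x y _ nx _ ny; apply: genG_mul.
- by move=> x _ nx; apply: genG_inv.
Qed.


Section Psi.
Variable psi : G -> int * int * int.
Hypothesis psiM : forall x y, lcsg 1 x -> lcsg 1 y -> psi (x * y) = psi x + psi y.
Hypothesis psi_lcs3 : forall x, lcsg 3 x -> psi x = 0.
Hypothesis psiC : psi C = (0, 0, 1%R).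
Hypothesis psiCa : psi (gcomm C a) = (1%R, 0, 0).
Hypothesis psiCb : psi (gcomm C b) = (0, 1%R, 0).

Local Hint Resolve lcsg0 lcsg1 lcsgM lcsgV lcsg_conj lcsg_comml lcsg_commr lcsgS lcsg1_C : core.

Lemma psi1 : psi 1 = 0.
Proof. by apply: (addrI (psi 1)); rewrite -psiM ?mulg1 ?addr0. Qed.

Lemma psiV x : lcsg 1 x -> psi x^-1 = - psi x.
Proof. by move=> x1; apply: (addrI (psi x)); rewrite -psiM ?mulgV ?psi1 ?subrr; auto. Qed.

Lemma psiJ_lcs2 g z : lcsg 2 z -> psi (g * z * g^-1) = psi z.
Proof. by move=> z2; rewrite conjg_gcommE psiM ?(psi_lcs3 (lcsg_commr g z2)) ?add0r; auto. Qed.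

Lemma psi_gcommMr g c c' : lcsg 1 c -> lcsg 1 c' ->
  psi (gcomm g (c * c')) = psi (gcomm g c) + psi (gcomm g c').
Proof. by move=> c1 c'1; rewrite gcommMr psiM ?psiJ_lcs2; auto. Qed.

Lemma psi_gcommJr g h c : lcsg 1 c -> psi (gcomm g (h * c * h^-1)) = psi (gcomm g c).
Proof.
by move=> c1; rewrite conjg_gcommE psi_gcommMr ?(@psi_lcs3 (gcomm g (gcomm h c))) ?add0r; auto.
Qed.

Lemma psi_gcommVr g c : lcsg 1 c -> psi (gcomm g c^-1) = - psi (gcomm g c).
Proof.
move=> c1; apply: (addrI (psi (gcomm g c))).
by rewrite -psi_gcommMr ?mulgV ?gcommg1 ?psi1 ?subrr; auto.
Qed.

Lemma psi3_gcomm_lcs1 c : lcsg 1 c ->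
  (psi (gcomm a c)).2 = 0 /\ (psi (gcomm b c)).2 = 0.
Proof.
move: c; apply: lcsg1_ind => [g||x y x1 y1 [ax bx] [ay b_y]|x x1 [ax bx]].
- by rewrite !psi_gcommJr // -(gcommV C a) -(gcommV C b) !psiV ?psiCa ?psiCb; auto.
- by rewrite !gcommg1 psi1.
- by rewrite !psi_gcommMr //= ax bx ay b_y addr0.
- by rewrite !psi_gcommVr //= ax bx oppr0.
Qed.

Lemma psi3_lcs2 z : lcsg 2 z -> (psi z).2 = 0.
Proof.
elim=> {z} [_ [x [y [x1 ->]]]|||].
- elim/gen_ab_ind: y => [|||y z Hy Hz|y Hy].
  + by rewrite -gcommV psiV /= ?(psi3_gcomm_lcs1 x1).1 ?oppr0; auto.
  + by rewrite -gcommV psiV /= ?(psi3_gcomm_lcs1 x1).2 ?oppr0; auto.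
  + by rewrite gcommg1 psi1.
  + by rewrite gcommMr psiM ?psiJ_lcs2 //= ?Hy ?Hz ?addr0; auto.
  + by rewrite gcommVr psiJ_lcs2 ?psiV //= ?Hy ?oppr0; auto.
- by rewrite psi1.
- by move=> x y x2 Hx y2 Hy; rewrite psiM //= ?Hx ?Hy ?addr0; auto.
- by move=> x x2 Hx; rewrite psiV //= ?Hx ?oppr0; auto.
Qed.

Lemma psi3J g c : lcsg 1 c -> (psi (g * c * g^-1)).2 = (psi c).2.
Proof. by move=> c1; rewrite conjg_gcommE psiM //= ?(@psi3_lcs2 (gcomm g c)) ?add0r; auto. Qed.


Lemma psi_gcomm_ab c : lcsg 1 c ->
  psi (gcomm a c) = (- (psi c).2, 0, 0) /\ psi (gcomm b c) = (0, - (psi c).2, 0).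
Proof.
move: c; apply: lcsg1_ind => [g||x y x1 y1 [ax bx] [ay b_y]|x x1 [ax bx]].
- by rewrite !psi_gcommJr // psi3J // -(gcommV C a) -(gcommV C b) !psiV ?psiCa ?psiCb ?psiC; auto.
- by rewrite !gcommg1 psi1.
- rewrite !psi_gcommMr // ax bx ay b_y psiM //.
  by split; apply: int3_ext; rewrite /= ?opprD ?addr0.
- by rewrite !psi_gcommVr // ax bx psiV //; split; apply: int3_ext; rewrite /= ?oppr0.
Qed.

(* The abelianization map G -> Z^2, sending a to (1, 0) and b to (0, 1), read off psi. *)
Definition abel g : int * int := (- (psi (gcomm b g)).2, (psi (gcomm a g)).2).

Lemma psi3_gcommMr x g h :
  (psi (gcomm x (g * h))).2 = (psi (gcomm x g)).2 + (psi (gcomm x h)).2.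
Proof. by rewrite gcommMr psiM /= ?psi3J; auto. Qed.

Lemma psi3_gcommVr x g : (psi (gcomm x g^-1)).2 = - (psi (gcomm x g)).2.
Proof. by rewrite gcommVr psi3J ?psiV; auto. Qed.

Lemma abelM g h : abel (g * h) = abel g + abel h.
Proof. by rewrite /abel !psi3_gcommMr /= opprD. Qed.

Lemma abelV g : abel g^-1 = - abel g.
Proof. by rewrite /abel !psi3_gcommVr. Qed.

Lemma abel1 : abel 1 = 0.
Proof. by rewrite /abel !gcommg1 psi1 /= oppr0. Qed.

Lemma abel_a : abel a = (1%R, 0).
Proof. by rewrite /abel gcommgg psi1 -gcommV psiV ?psiC; auto. Qed.

Lemma abel_b : abel b = (0, 1%R).
Proof. by rewrite /abel gcommgg psi1 psiC /= oppr0. Qed.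

Lemma abel_lcs1 c : lcsg 1 c -> abel c = 0.
Proof. by move=> /psi_gcomm_ab[ac bc]; rewrite /abel ac bc /= oppr0. Qed.

Lemma psiJ g c : lcsg 1 c -> psi (g * c * g^-1) = psi c - pad (abel g) (psi c).2.
Proof.
elim/gen_ab_ind: g c => [||| g h IHg IHh | g IHg] c c1.
- rewrite conjg_gcommE psiM; auto.
  rewrite (psi_gcomm_ab c1).1 abel_a.
  by apply: int3_ext => /=; ring.
- rewrite conjg_gcommE psiM; auto.
  rewrite (psi_gcomm_ab c1).2 abel_b.
  by apply: int3_ext => /=; ring.
- by rewrite mul1g invg1 mulg1 abel1 /pad /= !mul0r subr0.
- have -> : g * h * c * (g * h)^-1 = g * (h * c * h^-1) * g^-1 by rewrite !gnorm.
  rewrite IHg; auto.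
  rewrite psi3J // IHh // abelM.
  by apply: int3_ext => /=; ring.
- have c'1 : lcsg 1 (g^-1 * c * g^-1^-1) by auto.
  have := IHg _ c'1; rewrite !gnorm => ->.
  by rewrite abelV; apply: int3_ext => /=; ring.
Qed.

Lemma psi3_gcomm x y : (psi (gcomm x y)).2 = (abel x).1 * (abel y).2 - (abel x).2 * (abel y).1.
Proof.
elim/gen_ab_ind: y => [||| y z IHy IHz | y IHy].
- by rewrite abel_a -gcommV psiV /= /abel; auto; ring.
- by rewrite abel_b -gcommV psiV /= /abel; auto; ring.
- by rewrite gcommg1 psi1 abel1 /=; ring.
- by rewrite psi3_gcommMr IHy IHz abelM /=; ring.
- by rewrite psi3_gcommVr IHy abelV /=; ring.
Qed.


Lemma abel_expgz g n : abel (expgz g n) = ((n * (abel g).1)%R, (n * (abel g).2)%R).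
Proof.
elim/int_ind_pm1: n => [|n IHn|n IHn]; first by rewrite abel1 !mul0r.
- by rewrite expgzS abelM IHn; apply: injective_projections => /=; ring.
- by rewrite expgzB1 abelM abelV IHn; apply: injective_projections => /=; ring.
Qed.

Lemma abel_expgz_a n : abel (expgz a n) = (n, 0).
Proof. by rewrite abel_expgz abel_a /= mulr1 mulr0. Qed.

Lemma abel_expgz_b n : abel (expgz b n) = (0, n).
Proof. by rewrite abel_expgz abel_b /= mulr1 mulr0. Qed.

Lemma psi_expgz_C k : psi (expgz C k) = (0, 0, k).
Proof.
have C1 : lcsg 1 C by auto.
elim/int_ind_pm1: k => [|k IHk|k IHk]; first exact: psi1.
- by rewrite expgzS psiM ?IHk ?psiC //; apply: expgz_closed; auto.
- rewrite expgzB1 psiM ?IHk ?psiV ?psiC //; last by auto.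
  by apply: expgz_closed; auto.
Qed.

Definition abel_rep g := expgz a (abel g).1 * expgz b (abel g).2.
Definition derived_part g := (abel_rep g)^-1 * g.

Lemma derived_partK g : abel_rep g * derived_part g = g.
Proof. by rewrite mulVKg. Qed.

Lemma lcsg1_derived_part g : lcsg 1 (derived_part g).
Proof.
rewrite /derived_part /abel_rep.
elim/gen_ab_ind: g => [||| g h | g].
- by rewrite abel_a expgz1 expgz0 !gnorm.
- by rewrite abel_b expgz1 expgz0 !gnorm.
- by rewrite abel1 !expgz0 !gnorm.
- rewrite abelM; move: (abel g) (abel h) => [m n] [m' n'] /=; rewrite !expgzD.
  move: (expgz a m) (expgz b n) (expgz a m') (expgz b n') => p q r s gP hP.
  have -> : (p * r * (q * s))^-1 * (g * h) =
     (s^-1 * gcomm q^-1 r^-1 * s^-1^-1) *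
     ((s^-1 * r^-1) * ((p * q)^-1 * g) * (s^-1 * r^-1)^-1) * ((r * s)^-1 * h).
    by rewrite /gcomm !gnorm.
  by auto.
- rewrite abelV; move: (abel g) => [m n] /=; rewrite !expgzN.
  move: (expgz a m) (expgz b n) => p q gP.
  have -> : (p^-1 * q^-1)^-1 * g^-1 = ((q * p) * ((p * q)^-1 * g)^-1 * (q * p)^-1) * gcomm q p.
    by rewrite /gcomm !gnorm.
  by auto.
Qed.

Lemma psi_gcomm_a_expgzS m :
  psi (gcomm a (expgz b (m + 1))) = psi (gcomm a (expgz b m)) + (0, - m, 1%R).
Proof.
have bm1 : lcsg 1 (gcomm a (expgz b m)) by auto.
rewrite expgzS gcommMr psiM ?psiJ ?psiC ?abel_expgz_b; auto.
by apply: int3_ext; rewrite /= ?mulr1 ?mulr0 ?subr0 ?add0r.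
Qed.

Lemma psi_gcomm_expgzS_b n :
  psi (gcomm (expgz a (n + 1)) b) = psi (gcomm (expgz a n) b) + (- n, 0, 1%R).
Proof.
rewrite expgzS gcommMl psiM ?psiJ ?psiC ?abel_expgz_a; auto.
by apply: int3_ext; rewrite /= ?mulr1 ?mulr0 ?subr0 ?add0r // addrC.
Qed.


Definition psib g := psi (derived_part g).

Lemma psib_lcs1 c : lcsg 1 c -> psib c = psi c.
Proof. by move=> c1; rewrite /psib /derived_part /abel_rep abel_lcs1 // !expgz0 !gnorm. Qed.

Lemma psib_expgz_a n : psib (expgz a n) = 0.
Proof. by rewrite /psib /derived_part /abel_rep abel_expgz_a expgz0 mulg1 mulVg psi1. Qed.

Lemma psib_expgz_b n : psib (expgz b n) = 0.
Proof. by rewrite /psib /derived_part /abel_rep abel_expgz_b expgz0 mul1g mulVg psi1. Qed.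

Lemma psib_conj_expgz_C i j k :
  psib (expgz a i * expgz b j * expgz C k * (expgz b (- j) * expgz a (- i))) =
  (- (i * k), - (j * k), k).
Proof.
have Ck1 : lcsg 1 (expgz C k) by apply: expgz_closed; auto.
rewrite !expgzN -invgM psib_lcs1 ?psiJ ?psi_expgz_C ?abelM ?abel_expgz_a ?abel_expgz_b; auto.
by apply: int3_ext; rewrite /= ?addr0 ?add0r ?sub0r.
Qed.


Lemma derived_partM x y :
  let h := expgz b (- (abel y).2) * expgz a (- (abel y).1) in
  derived_part (x * y) =
    expgz b (- (abel y).2) * gcomm (expgz b (- (abel x).2)) (expgz a (- (abel y).1)) *
      (expgz b (- (abel y).2))^-1 * (h * derived_part x * h^-1) * derived_part y.
Proof.
rewrite /derived_part /abel_rep abelM; move: (abel x) (abel y) => [p q] [r s] /=.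
by rewrite !expgzD !expgzN /gcomm !gnorm.
Qed.

Lemma derived_partJ g d :
  derived_part (g * d * g^-1) =
    gcomm (expgz b (- (abel d).2) * expgz a (- (abel d).1)) g * (g * derived_part d * g^-1).
Proof.
rewrite /derived_part /abel_rep !abelM abelV addrAC subrr add0r.
by rewrite !expgzN /gcomm !gnorm.
Qed.


Section ModN.
Variable N : nat.
Local Notation Np := (Nprime N).

Lemma dvdz_Nprime d : (N %| d)%Z -> (Np %| d)%Z.
Proof. exact: dvdz_trans (Nprime_dvdz N). Qed.

Lemma psi_gcomm_a_expgz_b_dvdz3 m : (N %| m)%Z -> psi (gcomm a (expgz b m)) \in dvdz3 Np.
Proof.
apply: (dvdz3_Nprime_recurrence (F := fun m => psi (gcomm a (expgz b m))) (p := 0) (q := -1)).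
  by rewrite /= gcommg1 psi1.
by move=> k; rewrite /= psi_gcomm_a_expgzS mul0r mulN1r.
Qed.

Lemma psi_gcomm_expgz_a_b_dvdz3 n : (N %| n)%Z -> psi (gcomm (expgz a n) b) \in dvdz3 Np.
Proof.
apply: (dvdz3_Nprime_recurrence (F := fun n => psi (gcomm (expgz a n) b)) (p := -1) (q := 0)).
  by rewrite /= gcomm1g psi1.
by move=> k; rewrite /= psi_gcomm_expgzS_b mul0r mulN1r.
Qed.

Section NMultiple.
Variables m n : int.
Hypotheses (Nm : (N %| m)%Z) (Nn : (N %| n)%Z).
Local Notation x := (expgz b m * expgz a n).

Lemma psi3_gcomm_Nmultiple g : (Np %| (psi (gcomm x g)).2)%Z.
Proof.
rewrite psi3_gcomm abelM abel_expgz_a abel_expgz_b /=.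
by apply: dvdz_Nprime; rewrite !add0r addr0 rpredB ?dvdz_mulr.
Qed.

(* The commutators of powers of a and b with exponents in N Z vanish under
   psi modulo N'; this is what makes psib a homomorphism on Phi_N. *)
Lemma psi_gcomm_Nmultiple g : psi (gcomm x g) \in dvdz3 Np.
Proof.
elim/gen_ab_ind: g => [||| g h IHg IHh | g IHg].
- rewrite gcommMl (gcomm_commute (commute_expgz a n)) mulg1 mulgV mul1g.
  by rewrite -gcommV psiV ?rpredN ?psi_gcomm_a_expgz_b_dvdz3; auto.
- rewrite gcommMl [gcomm (expgz b m) b]gcomm_commute ?mulg1 ?psiJ; auto; last exact: commute_expgz.
  rewrite rpredB ?psi_gcomm_expgz_a_b_dvdz3 // pad_dvdz3l // abel_expgz_b ?dvdz0 //.
  exact: dvdz_Nprime.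
- by rewrite gcommg1 psi1 rpred0.
- rewrite gcommMr psiM ?psiJ; auto.
  by rewrite rpredD ?rpredB ?pad_dvdz3 ?psi3_gcomm_Nmultiple.
- rewrite gcommVr psiJ ?psiV; auto.
  by rewrite rpredB ?rpredN ?pad_dvdz3 //= rpredN psi3_gcomm_Nmultiple.
Qed.

End NMultiple.


Lemma psi_gcomm_expgz_b_Nmultiple m g : (N %| m)%Z -> psi (gcomm (expgz b m) g) \in dvdz3 Np.
Proof. by move=> Nm; have := psi_gcomm_Nmultiple Nm (dvdz0 N) g; rewrite expgz0 mulg1. Qed.

Variable phi1 : G -> int * int.
Hypothesis phi1M : forall x y, eq2m N (phi1 (x * y)) (add2 (phi1 x) (phi1 y)).
Hypothesis phi1a : eq2m N (phi1 a) (1%R, 0).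
Hypothesis phi1b : eq2m N (phi1 b) (0, 1%R).

Lemma phi1_abel g : eq2m N (phi1 g) (abel g).
Proof.
have phi1M1 x y : ((phi1 (x * y)).1 = (phi1 x).1 + (phi1 y).1 %[mod N])%Z.
  by case: (phi1M x y).
have phi1M2 x y : ((phi1 (x * y)).2 = (phi1 x).2 + (phi1 y).2 %[mod N])%Z.
  by case: (phi1M x y).
elim/gen_ab_ind: g => [||| g h [g1 g2] [h1 h2] | g [g1 g2]].
- by rewrite abel_a.
- by rewrite abel_b.
- rewrite abel1; split.
  + by apply: (@homz_mod1 _ (fun _ => True) N (fun x => (phi1 x).1)).
  + by apply: (@homz_mod1 _ (fun _ => True) N (fun x => (phi1 x).2)).
- rewrite abelM; split; rewrite /eqm /=.
  + by rewrite phi1M1 -modzDm g1 h1 modzDm.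
  + by rewrite phi1M2 -modzDm g2 h2 modzDm.
- rewrite abelV; split; rewrite /eqm /=.
  + by rewrite (@homz_modV _ (fun _ => True) N (fun x => (phi1 x).1)) // -modzNm g1 modzNm.
  + by rewrite (@homz_modV _ (fun _ => True) N (fun x => (phi1 x).2)) // -modzNm g2 modzNm.
Qed.

Definition inPhiN x := eq2m N (phi1 x) (0, 0).

Lemma inPhiN_abel x : inPhiN x <-> (N %| (abel x).1)%Z /\ (N %| (abel x).2)%Z.
Proof.
have [e1 e2] := phi1_abel x.
by rewrite /inPhiN /eq2m /eqm e1 e2 !eqz_modP !subr0; apply: iff_refl.
Qed.

Lemma inPhiN1 : inPhiN 1.
Proof. by apply/inPhiN_abel; rewrite abel1 dvdz0. Qed.

Lemma inPhiNM x y : inPhiN x -> inPhiN y -> inPhiN (x * y).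
Proof.
move=> /inPhiN_abel[+ +] /inPhiN_abel[+ +]; rewrite (inPhiN_abel (x * y)) abelM.
by case: (abel x) (abel y) => [p q] [r s] /= *; split; apply: rpredD.
Qed.

Lemma inPhiNV x : inPhiN x -> inPhiN x^-1.
Proof.
move=> /inPhiN_abel[+ +]; rewrite (inPhiN_abel x^-1) abelV.
by case: (abel x) => [p q] /= *; rewrite !rpredN.
Qed.

Lemma inPhiN_lcs1 c : lcsg 1 c -> inPhiN c.
Proof. by move=> c1; apply/inPhiN_abel; rewrite abel_lcs1 ?dvdz0. Qed.

Lemma inPhiN_expgz_a n : (N %| n)%Z -> inPhiN (expgz a n).
Proof. by move=> Nn; apply/inPhiN_abel; rewrite abel_expgz_a dvdz0. Qed.

Lemma inPhiN_expgz_b n : (N %| n)%Z -> inPhiN (expgz b n).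
Proof. by move=> Nn; apply/inPhiN_abel; rewrite abel_expgz_b dvdz0. Qed.


Local Hint Resolve inPhiN1 inPhiNM inPhiNV inPhiN_lcs1 : core.

Lemma psibM x y : inPhiN x -> inPhiN y -> eq3m Np (psib (x * y)) (psib x + psib y).
Proof.
move=> /inPhiN_abel[x1 x2] /inPhiN_abel[y1 y2]; apply/eq3mP.
have dx := lcsg1_derived_part x; have dy := lcsg1_derived_part y.
rewrite /psib derived_partM.
set s := expgz b (- (abel y).2); set h := s * expgz a (- (abel y).1).
set K := gcomm (expgz b (- (abel x).2)) (expgz a (- (abel y).1)).
have K1 : lcsg 1 K by apply: lcsg_comml.
have sK1 : lcsg 1 (s * K * s^-1) by auto.
have hx1 : lcsg 1 (h * derived_part x * h^-1) by auto.
rewrite (psiM (lcsgM sK1 hx1) dy) (psiM sK1 hx1) (psiJ _ K1) (psiJ _ dx).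
have -> : psi K - pad (abel s) (psi K).2 +
          (psi (derived_part x) - pad (abel h) (psi (derived_part x)).2) +
          psi (derived_part y) - (psi (derived_part x) + psi (derived_part y)) =
          psi K - pad (abel s) (psi K).2 - pad (abel h) (psi (derived_part x)).2.
  by apply: int3_ext => /=; ring.
rewrite !rpredB ?psi_gcomm_expgz_b_Nmultiple ?rpredN //.
- by apply: pad_dvdz3l; rewrite /s abel_expgz_b /= ?dvdz0 // rpredN dvdz_Nprime.
- apply: pad_dvdz3l; rewrite /h /s abelM abel_expgz_a abel_expgz_b /= ?addr0 ?add0r.
  all: by rewrite rpredN dvdz_Nprime.
Qed.


Variable phi2 : G -> int.
Hypothesis phi2M : forall x y, inPhiN x -> inPhiN y ->
  eqm Np (phi2 (x * y)) (phi2 x + phi2 y).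
Hypothesis phi2aN : eqm Np (phi2 (expgz a N)) 0.
Hypothesis phi2bN : eqm Np (phi2 (expgz b N)) 0.
Hypothesis phi2C : forall i j,
  eqm Np (phi2 (expgz a i * expgz b j * C * (expgz b (- j) * expgz a (- i)))) 1%R.

Let phi2_1 : eqm Np (phi2 1) 0 := homz_mod1 inPhiN1 phi2M.
Let phi2V x : inPhiN x -> eqm Np (phi2 x^-1) (- phi2 x) := homz_modV inPhiN1 inPhiNV phi2M (x := x).
Let phi2_gcomm x y : inPhiN x -> inPhiN y -> eqm Np (phi2 (gcomm x y)) 0 :=
  homz_mod_gcomm inPhiN1 inPhiNM inPhiNV phi2M (x := x) (y := y).

Lemma phi2_lcs1 c : lcsg 1 c -> eqm Np (phi2 c) (psi c).2.
Proof.
move: c; apply: lcsg1_ind => [g||x y x1 y1 ex ey|x x1 ex].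
- pose r := abel_rep g; pose X := r * derived_part g * r^-1; pose Y := r * C * r^-1.
  have X1 : lcsg 1 X by apply/lcsg_conj/lcsg1_derived_part.
  have Y1 : lcsg 1 Y by apply/lcsg_conj/lcsg1_C.
  rewrite psi3J // psiC.
  have -> : g * C * g^-1 = gcomm X Y * Y.
    by rewrite -{1 2}(derived_partK g) /X /Y /r /gcomm !gnorm.
  rewrite /eqm phi2M; auto.
  rewrite -modzDml phi2_gcomm; auto.
  rewrite modzDml add0r.
  have := phi2C (abel g).1 (abel g).2.
  by rewrite (expgzN b (abel g).2) (expgzN a (abel g).1) -invgM.
- by rewrite /eqm phi2_1 psi1.
- rewrite /eqm phi2M; auto.
  by rewrite psiM //= -modzDm ex ey modzDm.
- rewrite /eqm phi2V; auto.
  by rewrite psiV //= -modzNm ex modzNm.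
Qed.


Lemma phi2_expgz_Nmultiple x k : inPhiN (expgz x N) -> eqm Np (phi2 (expgz x N)) 0 ->
  (N %| k)%Z -> eqm Np (phi2 (expgz x k)) 0.
Proof.
move=> xN phi2xN /dvdzP[j ->]; rewrite expgzMr /eqm.
by rewrite (homz_mod_expgz inPhiN1 inPhiNM inPhiNV phi2M) // -modzMmr phi2xN modzMmr mulr0.
Qed.

Lemma phi2_psib d : inPhiN d -> eqm Np (phi2 d) (psib d).2.
Proof.
move=> dP; have /inPhiN_abel[d1 d2] := dP; have dd := lcsg1_derived_part d.
have ha : eqm Np (phi2 (expgz a (abel d).1)) 0.
  by apply: phi2_expgz_Nmultiple => //; apply: inPhiN_expgz_a.
have hb : eqm Np (phi2 (expgz b (abel d).2)) 0.
  by apply: phi2_expgz_Nmultiple => //; apply: inPhiN_expgz_b.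
have hd := phi2_lcs1 dd.
have := homz_modM3 inPhiNM phi2M (inPhiN_expgz_a d1) (inPhiN_expgz_b d2) (inPhiN_lcs1 dd).
rewrite -/(abel_rep d) derived_partK /psib.
move: ha hb hd; rewrite /eqm !eqz_modP !subr0 => ha hb hd hm.
set A := phi2 (expgz a _) in ha hm; set B := phi2 (expgz b _) in hb hm.
have -> : phi2 d - (psi (derived_part d)).2 =
  (phi2 d - (A + B + phi2 (derived_part d))) + A + B +
  (phi2 (derived_part d) - (psi (derived_part d)).2) by ring.
exact: rpredD (rpredD (rpredD hm ha) hb) hd.
Qed.

Lemma psibJ g d : inPhiN d -> eq3m Np (psib (g * d * g^-1)) (psib d - pad (phi1 g) (phi2 d)).
Proof.
move=> dP; have /inPhiN_abel[d1 d2] := dP; have dd := lcsg1_derived_part d.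
apply/eq3mP; rewrite /psib derived_partJ psiM ?psiJ; auto.
have -> : psi (gcomm (expgz b (- (abel d).2) * expgz a (- (abel d).1)) g) +
    (psi (derived_part d) - pad (abel g) (psi (derived_part d)).2) -
    (psi (derived_part d) - pad (phi1 g) (phi2 d)) =
  psi (gcomm (expgz b (- (abel d).2) * expgz a (- (abel d).1)) g) +
    (pad (phi1 g) (phi2 d) - pad (abel g) (psi (derived_part d)).2).
  by apply: int3_ext => /=; ring.
apply: rpredD; first by apply: psi_gcomm_Nmultiple; rewrite rpredN.
by apply: pad_dvdz3B; [apply: phi1_abel | apply: phi2_psib].
Qed.

End ModN.

End Psi.

End TwoGenerated.

Lemma ord2E (i : 'I_2) : i = i0 \/ i = i1.
Proof. by case: i => [[|[|//]] Hi]; [left|right]; apply: val_inj. Qed.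

Lemma matrix2P (M N : mat) : M i0 i0 = N i0 i0 -> M i0 i1 = N i0 i1 ->
  M i1 i0 = N i1 i0 -> M i1 i1 = N i1 i1 -> M = N.
Proof.
move=> e00 e01 e10 e11; apply/matrixP => i j.
by case: (ord2E i) => ->; case: (ord2E j) => ->.
Qed.

Section Entries.
Variables M N : mat.

Let sum2 (F : 'I_2 -> int) : \sum_(k < 2) F k = F i0 + F i1.
Proof. by rewrite !big_ord_recl big_ord0 addr0; congr (_ + F _); apply: val_inj. Qed.

Lemma mulmx00 : (M *m N) i0 i0 = M i0 i0 * N i0 i0 + M i0 i1 * N i1 i0.
Proof. by rewrite mxE sum2. Qed.
Lemma mulmx01 : (M *m N) i0 i1 = M i0 i0 * N i0 i1 + M i0 i1 * N i1 i1.
Proof. by rewrite mxE sum2. Qed.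
Lemma mulmx10 : (M *m N) i1 i0 = M i1 i0 * N i0 i0 + M i1 i1 * N i1 i0.
Proof. by rewrite mxE sum2. Qed.
Lemma mulmx11 : (M *m N) i1 i1 = M i1 i0 * N i0 i1 + M i1 i1 * N i1 i1.
Proof. by rewrite mxE sum2. Qed.

Let adjE i j : \adj M i j = (-1) ^+ (j + i) * M (lift j ord0) (lift i ord0).
Proof. by rewrite mxE /cofactor det_mx11 !mxE. Qed.
Let lift01 : lift i0 (ord0 : 'I_1) = i1. Proof. exact: val_inj. Qed.
Let lift10 : lift i1 (ord0 : 'I_1) = i0. Proof. exact: val_inj. Qed.

Lemma adj00 : \adj M i0 i0 = M i1 i1.
Proof. by rewrite adjE /= expr0 mul1r lift01. Qed.
Lemma adj01 : \adj M i0 i1 = - M i0 i1.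
Proof. by rewrite adjE /= expr1 mulN1r lift01 lift10. Qed.
Lemma adj10 : \adj M i1 i0 = - M i1 i0.
Proof. by rewrite adjE /= expr1 mulN1r lift01 lift10. Qed.
Lemma adj11 : \adj M i1 i1 = M i0 i0.
Proof. by rewrite adjE /= expr2 mulN1r opprK mul1r lift10. Qed.

End Entries.

Lemma det2 (M : mat) : \det M = M i0 i0 * M i1 i1 - M i0 i1 * M i1 i0.
Proof.
have := congr1 (fun A : mat => A i0 i0) (mul_mx_adj M).
by rewrite /= mulmx00 adj00 adj10 mxE /= mulr1n => <-; ring.
Qed.

Definition evenmx (M : mat) := forall i j, (2 %| M i j)%Z.

Lemma evenmxD M N : evenmx M -> evenmx N -> evenmx (M + N).
Proof. by move=> eM eN i j; rewrite mxE rpredD. Qed.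

Lemma evenmxN M : evenmx M -> evenmx (- M).
Proof. by move=> eM i j; rewrite mxE rpredN. Qed.

Lemma evenmx_mull M N : evenmx M -> evenmx (M *m N).
Proof. by move=> eM i j; rewrite mxE rpred_sum // => k _; rewrite dvdz_mulr. Qed.

Lemma evenmx_mulr M N : evenmx N -> evenmx (M *m N).
Proof. by move=> eN i j; rewrite mxE rpred_sum // => k _; rewrite dvdz_mull. Qed.

Definition inGamma2 (M : mat) := \det M = 1 /\ evenmx (M - 1).

Lemma inG_Gamma2 M : inG M <-> inGamma2 M /\ 0 < M i0 i0.
Proof.
have modE i j : (M i j = (i == j)%:R %[mod 2])%Z <-> (2 %| (M - 1) i j)%Z.
  by rewrite eqz_modP !mxE.
split=> [[dM [mM pM]]|[[dM eM] pM]]; split=> //; first by split=> // i j; apply/modE.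
by split=> // i j; apply/modE.
Qed.

Lemma inGamma2M M N : inGamma2 M -> inGamma2 N -> inGamma2 (M *m N).
Proof.
move=> [dM eM] [dN eN]; split; first by rewrite det_mulmx dM dN mulr1.
have -> : M *m N - 1 = (M - 1) *m N + (N - 1) by rewrite mulmxBl mul1mx addrA subrK.
by apply: evenmxD => //; apply: evenmx_mull.
Qed.

Lemma inGamma2_adj M : inGamma2 M -> inGamma2 (\adj M).
Proof.
move=> [dM eM]; split.
  by have := congr1 determinant (mul_adj_mx M); rewrite det_mulmx dM mulr1 det1.
have -> : \adj M - 1 = \adj M *m (- (M - 1)).
  by rewrite mulmxN mulmxBr mul_adj_mx dM mulmx1 opprB.
by apply/evenmx_mulr/evenmxN.
Qed.

Lemma inGamma2N M : inGamma2 M -> inGamma2 (- M).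
Proof.
move=> [dM eM]; split; first by rewrite -scaleN1r detZ dM mulr1 sqrrN expr1n.
have -> : - M - 1 = - (M - 1) - 1 *+ 2.
  by rewrite opprB mulr2n opprD addrA [1 - M - 1]addrAC subrr add0r.
apply/evenmxD/evenmxN; first exact/evenmxN.
by move=> i j; rewrite !mxE; case: (i == j).
Qed.

Lemma inGamma2_odd M : inGamma2 M -> M i0 i0 != 0.
Proof. by case=> _ /(_ i0 i0); rewrite !mxE /= => /dvdzP[k]; lia. Qed.

Lemma oppmxE (M : mat) i j : (- M) i j = - M i j.
Proof. by rewrite mxE. Qed.

Lemma normalize_id (M : mat) : 0 < M i0 i0 -> normalize M = M.
Proof. by rewrite /normalize => M0; case: ifP => //; lia. Qed.

Lemma normalizeN (M : mat) : M i0 i0 != 0 -> normalize (- M) = normalize M.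
Proof. by rewrite /normalize oppmxE opprK => M0; case: ifPn => h1; case: ifPn => h2 //; exfalso; lia. Qed.

Lemma normalizeNmx (M : mat) : normalize M = M \/ normalize M = - M.
Proof. by rewrite /normalize; case: ifP; [right|left]. Qed.

Lemma normalize_mull (M N : mat) : (M *m N) i0 i0 != 0 ->
  normalize (normalize M *m N) = normalize (M *m N).
Proof. by move=> MN0; case: (normalizeNmx M) => ->; rewrite ?mulNmx ?normalizeN. Qed.

Lemma normalize_mulr (M N : mat) : (M *m N) i0 i0 != 0 ->
  normalize (M *m normalize N) = normalize (M *m N).
Proof. by move=> MN0; case: (normalizeNmx N) => ->; rewrite ?mulmxN ?normalizeN. Qed.

Lemma inG_normalize M : inGamma2 M -> inG (normalize M).
Proof.
move=> GM; have M0 := inGamma2_odd GM; apply/inG_Gamma2; rewrite /normalize.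
by case: ifPn => M0neg; split; rewrite ?oppmxE; [exact: inGamma2N | lia | exact: GM | lia].
Qed.

Lemma inG_gmul M N : inG M -> inG N -> inG (gmul M N).
Proof. by move=> /inG_Gamma2[GM _] /inG_Gamma2[GN _]; apply/inG_normalize/inGamma2M. Qed.

Lemma inG_ginv M : inG M -> inG (ginv M).
Proof. by move=> /inG_Gamma2[GM _]; apply/inG_normalize/inGamma2_adj. Qed.

Lemma inG_gone : inG gone.
Proof.
apply/inG_Gamma2; rewrite /gone mxE /=; split=> //; split; first exact: det1.
by move=> i j; rewrite subrr mxE dvdz0.
Qed.

Lemma gmulA M N P : inG M -> inG N -> inG P -> gmul (gmul M N) P = gmul M (gmul N P).
Proof.
move=> /inG_Gamma2[GM _] /inG_Gamma2[GN _] /inG_Gamma2[GP _].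
have MNP0 := inGamma2_odd (inGamma2M (inGamma2M GM GN) GP).
by rewrite /gmul normalize_mull // normalize_mulr ?mulmxA.
Qed.

Lemma gmul1g M : inG M -> gmul gone M = M.
Proof. by move=> /inG_Gamma2[_ M0]; rewrite /gmul /gone mul1mx normalize_id. Qed.

Lemma gmulg1 M : inG M -> gmul M gone = M.
Proof. by move=> /inG_Gamma2[_ M0]; rewrite /gmul /gone mulmx1 normalize_id. Qed.

Lemma gmulVg M : inG M -> gmul (ginv M) M = gone.
Proof.
move=> [dM _]; rewrite /gmul /ginv normalize_mull mul_adj_mx dM ?normalize_id //.
all: by rewrite mxE.
Qed.

Lemma gmulgV M : inG M -> gmul M (ginv M) = gone.
Proof.
move=> [dM _]; rewrite /gmul /ginv normalize_mulr mul_mx_adj dM ?normalize_id //.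
all: by rewrite mxE.
Qed.

Definition inGb (M : mat) : bool :=
  [&& \det M == 1, [forall i, forall j, (M i j == (i == j)%:R %[mod 2])%Z] & 0 < M i0 i0].

Lemma inGP M : inG M <-> inGb M.
Proof.
split=> [[dM [mM M0]]|/and3P[/eqP dM /forallP mM M0]].
  by rewrite /inGb dM eqxx M0 andbT; apply/forallP=> i; apply/forallP=> j; apply/eqP.
by split=> //; split=> // i j; apply/eqP; have /forallP := mM i; apply.
Qed.

Definition Gbar2 := {M : mat | inGb M}.
HB.instance Definition _ := Choice.on Gbar2.

Lemma inG_val (x : Gbar2) : inG (val x).
Proof. by apply/inGP; case: x. Qed.

Definition Gbar2_mul (x y : Gbar2) : Gbar2 :=
  exist _ (gmul (val x) (val y)) (iffLR (inGP _) (inG_gmul (inG_val x) (inG_val y))).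
Definition Gbar2_inv (x : Gbar2) : Gbar2 :=
  exist _ (ginv (val x)) (iffLR (inGP _) (inG_ginv (inG_val x))).
Definition Gbar2_one : Gbar2 := exist _ gone (iffLR (inGP _) inG_gone).

Lemma Gbar2_mulA : associative Gbar2_mul.
Proof. by move=> x y z; apply/val_inj/esym/gmulA; apply: inG_val. Qed.
Lemma Gbar2_mul1g : left_id Gbar2_one Gbar2_mul.
Proof. by move=> x; apply/val_inj/gmul1g/inG_val. Qed.
Lemma Gbar2_mulg1 : right_id Gbar2_one Gbar2_mul.
Proof. by move=> x; apply/val_inj/gmulg1/inG_val. Qed.
Lemma Gbar2_mulVg : left_inverse Gbar2_one Gbar2_inv Gbar2_mul.
Proof. by move=> x; apply/val_inj/gmulVg/inG_val. Qed.
Lemma Gbar2_mulgV : right_inverse Gbar2_one Gbar2_inv Gbar2_mul.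
Proof. by move=> x; apply/val_inj/gmulgV/inG_val. Qed.

HB.instance Definition _ := isGroup.Build Gbar2
  Gbar2_mulA Gbar2_mul1g Gbar2_mulg1 Gbar2_mulVg Gbar2_mulgV.

Lemma val_mul (x y : Gbar2) : val (x * y)%g = gmul (val x) (val y). Proof. by []. Qed.
Lemma val_inv (x : Gbar2) : val x^-1%g = ginv (val x). Proof. by []. Qed.

Lemma inG_Am : inG Am.
Proof.
apply/inG_Gamma2; rewrite mxE /=; split=> //; split; first by rewrite det2 !mxE.
by move=> i j; rewrite !mxE addrAC subrr add0r dvdz_mull.
Qed.

Lemma inG_Bm : inG Bm.
Proof.
apply/inG_Gamma2; rewrite mxE /=; split=> //; split; first by rewrite det2 !mxE.
by move=> i j; rewrite !mxE addrAC subrr add0r dvdz_mull.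
Qed.

Definition Abar : Gbar2 := exist _ Am (iffLR (inGP _) inG_Am).
Definition Bbar : Gbar2 := exist _ Bm (iffLR (inGP _) inG_Bm).

Lemma val_expgz (g : Gbar2) n : val (expgz g n) = gpow (val g) n.
Proof.
have val_expg (h : Gbar2) k : val (h ^+ k)%g = iter k (gmul (val h)) gone.
  by elim: k => [//|k IHk]; rewrite expgS val_mul IHk.
case: n => k; first exact: val_expg.
by rewrite -[expgz g (Negz k)]/(g ^- k.+1)%g -expVgn val_expg.
Qed.

Lemma expgz_Abar_entries n :
  [/\ val (expgz Abar n) i0 i0 = 1, val (expgz Abar n) i0 i1 = 2 * n,
      val (expgz Abar n) i1 i0 = 0 & val (expgz Abar n) i1 i1 = 1].
Proof.
have [a00 a01 a10 a11] : [/\ Am i0 i0 = 1, Am i0 i1 = 2, Am i1 i0 = 0 & Am i1 i1 = 1].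
  by rewrite !mxE.
elim/int_ind_pm1: n => [|n [e00 e01 e10 e11]|n [e00 e01 e10 e11]].
- by rewrite /= /gone !mxE mulr0.
- rewrite expgzS val_mul /gmul normalize_id; last by rewrite mulmx00 /= a00 a10 e00 e01; lia.
  by rewrite !(mulmx00, mulmx01, mulmx10, mulmx11) /= a00 a01 a10 a11 e00 e01 e10 e11; split; lia.
- have Ainv : ginv Am = \adj Am by rewrite /ginv normalize_id // adj00 a11.
  rewrite expgzB1 val_mul /= Ainv /gmul normalize_id;
    last by rewrite mulmx00 adj00 adj10 a10 a11 e00 e01; lia.
  rewrite !(mulmx00, mulmx01, mulmx10, mulmx11) !(adj00, adj01, adj10, adj11).
  by rewrite a00 a01 a10 a11 e00 e01 e10 e11; split; lia.
Qed.

Lemma expgz_Bbar_entries n :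
  [/\ val (expgz Bbar n) i0 i0 = 1, val (expgz Bbar n) i0 i1 = 0,
      val (expgz Bbar n) i1 i0 = 2 * n & val (expgz Bbar n) i1 i1 = 1].
Proof.
have [b00 b01 b10 b11] : [/\ Bm i0 i0 = 1, Bm i0 i1 = 0, Bm i1 i0 = 2 & Bm i1 i1 = 1].
  by rewrite !mxE.
elim/int_ind_pm1: n => [|n [e00 e01 e10 e11]|n [e00 e01 e10 e11]].
- by rewrite /= /gone !mxE mulr0.
- rewrite expgzS val_mul /gmul normalize_id; last by rewrite mulmx00 /= b00 b10 e00 e01; lia.
  by rewrite !(mulmx00, mulmx01, mulmx10, mulmx11) /= b00 b01 b10 b11 e00 e01 e10 e11; split; lia.
- have Binv : ginv Bm = \adj Bm by rewrite /ginv normalize_id // adj00 b11.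
  rewrite expgzB1 val_mul /= Binv /gmul normalize_id;
    last by rewrite mulmx00 adj00 adj10 b10 b11 e00 e01; lia.
  rewrite !(mulmx00, mulmx01, mulmx10, mulmx11) !(adj00, adj01, adj10, adj11).
  by rewrite b00 b01 b10 b11 e00 e01 e10 e11; split; lia.
Qed.

Lemma euclid_shift (x z : int) : z != 0 -> (x + z = 1 %[mod 2])%Z ->
  exists k, `|x + 2 * k * z| < `|z|.
Proof.
move=> z0 xz_odd; have z2 : 2 * z != 0 by lia.
have := divz_eq x (2 * z); have := modz_ge0 x z2; have := ltz_mod x z2.
move: xz_odd; set q := (x %/ (2 * z))%Z; set r := (x %% (2 * z))%Z => xz_odd rlt rge xE.
case: (ltrP r `|z|) => rz; first by exists (- q); nia.
by case: (ltrP 0 z) => zpos; [exists (- q - 1) | exists (- q + 1)]; nia.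
Qed.

Definition col0_size (M : mat) := (`|M i0 i0| + `|M i1 i0|)%N.

Lemma col0_size_normalize M : col0_size (normalize M) = col0_size M.
Proof. by rewrite /col0_size /normalize; case: ifP; rewrite ?oppmxE ?abszN. Qed.

Lemma inG_entries M : inG M ->
  [/\ M i0 i0 * M i1 i1 - M i0 i1 * M i1 i0 = 1, 0 < M i0 i0 &
      [/\ (2 %| M i0 i0 - 1)%Z, (2 %| M i0 i1)%Z, (2 %| M i1 i0)%Z & (2 %| M i1 i1 - 1)%Z]].
Proof.
case/inG_Gamma2=> [[dM eM] M0]; rewrite -det2; move: (eM i0 i0) (eM i0 i1) (eM i1 i0) (eM i1 i1).
by rewrite !mxE /= !subr0.
Qed.

Lemma Gbar2_upper (x : Gbar2) : val x i1 i0 = 0 -> x = expgz Abar (val x i0 i1 %/ 2)%Z.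
Proof.
have [dx x0 [/dvdzP[k x00] /dvdzP[l x01] _ /dvdzP[m x11]]] := inG_entries (inG_val x).
move=> x10; apply: val_inj; have [e00 e01 e10 e11] := expgz_Abar_entries (val x i0 i1 %/ 2)%Z.
by apply: matrix2P; rewrite ?e00 ?e01 ?e10 ?e11 //; nia.
Qed.

Lemma Gbar2_gen (x : Gbar2) : genG (fun y => y = Abar \/ y = Bbar) x.
Proof.
set S := fun y => _; have SA n : genG S (expgz Abar n).
  by apply: expgz_closed; [apply: genG_one | apply: genG_mul | apply: genG_inv | apply: genG_in; left].
have SB n : genG S (expgz Bbar n).
  by apply: expgz_closed; [apply: genG_one | apply: genG_mul | apply: genG_inv | apply: genG_in; right].
have [n] := ubnP (col0_size (val x)); elim: n x => // n IHn x.
have [_ _ [/dvdzP[k x00] _ /dvdzP[l x10] _]] := inG_entries (inG_val x).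
case: (eqVneq (val x i1 i0) 0) => [/Gbar2_upper -> _ //| x10_0 sx].
have xodd : (val x i0 i0 + val x i1 i0 = 1 %[mod 2])%Z.
  by apply/eqz_modP/dvdzP; exists (k + l); lia.
have shift (g : Gbar2) : genG S g -> genG S (g * x)%g -> genG S x.
  by move=> Sg Sgx; rewrite -(mulKg g x); apply/genG_mul/Sgx/genG_inv.
case: (ltrP `|val x i1 i0| `|val x i0 i0|) => [lt10|le01].
- have [j xj] := euclid_shift x10_0 xodd.
  apply: (shift _ (SA j)); apply: IHn.
  have [e00 e01 e10 e11] := expgz_Abar_entries j.
  move: sx; rewrite val_mul /gmul col0_size_normalize /col0_size.
  by rewrite mulmx00 mulmx10 e00 e01 e10 e11; lia.
- have x00_0 : val x i0 i0 != 0 by lia.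
  have [j xj] := euclid_shift x00_0 (etrans (congr1 (modz^~ 2) (addrC _ _)) xodd).
  apply: (shift _ (SB j)); apply: IHn.
  have [e00 e01 e10 e11] := expgz_Bbar_entries j.
  move: sx; rewrite val_mul /gmul col0_size_normalize /col0_size.
  by rewrite mulmx00 mulmx10 e00 e01 e10 e11; lia.
Qed.

Lemma Gbar2P x : inG x -> exists y : Gbar2, val y = x.
Proof. by move=> /inGP xG; exists (exist _ x xG). Qed.

Lemma lcsg_lcs k (y : Gbar2) : lcsg k y -> lcs k (val y).
Proof.
elim: k y => [y _|k IHk y]; first exact: inG_val.
elim=> {y} [_ [g [h [kg ->]]]|||].
- by apply: gen_in; exists (val g), (val h); split; [apply: IHk | split; [apply: inG_val|]].
- exact: gen_one.
- by move=> x y _ kx _ ky; apply: gen_mul.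
- by move=> x _ kx; apply: gen_inv.
Qed.

Lemma lcs_lcsg k x : lcs k x -> exists2 y : Gbar2, val y = x & lcsg k y.
Proof.
elim: k x => [x /Gbar2P[y yx]|k IHk x]; first by exists y.
elim=> {x} [_ [g [h [/IHk[g' <- kg] [/Gbar2P[h' <-] ->]]]]|||].
- by exists (gcomm g' h'); last exact: lcsg_comml.
- by exists 1%g; last exact: lcsg1.
- by move=> _ _ _ [x <- kx] _ [y <- ky]; exists (x * y)%g; last exact: lcsgM.
- by move=> _ _ [x <- kx]; exists x^-1%g; last exact: lcsgV.
Qed.

Section Proposition7.
Variable N : nat.
Variable psi : mat -> int * int * int.
Hypothesis Hpsi_hom : forall x y, Gamma 2 x -> Gamma 2 y ->
  psi (gmul x y) = add3 (psi x) (psi y).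
Hypothesis Hpsi_ker : forall x, Gamma 2 x -> (psi x = (0, 0, 0) <-> Gamma 4 x).
Hypothesis Hpsi_C : psi Cm = (0, 0, 1).
Hypothesis Hpsi_CA : psi (comm Cm Am) = (1, 0, 0).
Hypothesis Hpsi_CB : psi (comm Cm Bm) = (0, 1, 0).
Variable phi1 : mat -> int * int.
Hypothesis Hphi1_hom : forall x y, inG x -> inG y ->
  eq2m N (phi1 (gmul x y)) (add2 (phi1 x) (phi1 y)).
Hypothesis Hphi1_A : eq2m N (phi1 Am) (1, 0).
Hypothesis Hphi1_B : eq2m N (phi1 Bm) (0, 1).
Variable phi2 : mat -> int.
Hypothesis Hphi2_hom : forall x y, PhiN N phi1 x -> PhiN N phi1 y ->
  eqm (Nprime N) (phi2 (gmul x y)) (phi2 x + phi2 y).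
Hypothesis Hphi2_AN : eqm (Nprime N) (phi2 (gpow Am N%:Z)) 0.
Hypothesis Hphi2_BN : eqm (Nprime N) (phi2 (gpow Bm N%:Z)) 0.
Hypothesis Hphi2_C : forall i j : int,
  eqm (Nprime N) (phi2 (gmul (gmul (gmul (gpow Am i) (gpow Bm j)) Cm)
                             (gmul (gpow Bm (- j)) (gpow Am (- i))))) 1.

Local Notation psi' := (fun y : Gbar2 => psi (val y)).
Local Notation phi1' := (fun y : Gbar2 => phi1 (val y)).
Local Notation phi2' := (fun y : Gbar2 => phi2 (val y)).

Let psi'M x y : lcsg 1 x -> lcsg 1 y -> psi' (x * y)%g = psi' x + psi' y.
Proof. by move=> /lcsg_lcs x1 /lcsg_lcs y1; apply: Hpsi_hom. Qed.

Let psi'_lcs3 x : lcsg 3 x -> psi' x = 0.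
Proof. by move=> x3; apply/(Hpsi_ker (lcsg_lcs (lcsgS (lcsgS x3))))/lcsg_lcs. Qed.

Let phi1'M x y : eq2m N (phi1' (x * y)%g) (add2 (phi1' x) (phi1' y)).
Proof. exact: Hphi1_hom (inG_val x) (inG_val y). Qed.

Let inPhiN_val x : inPhiN N phi1' x <-> PhiN N phi1 (val x).
Proof. by split=> [|[]//]; split=> //; apply: inG_val. Qed.

Let phi2'M x y : inPhiN N phi1' x -> inPhiN N phi1' y ->
  eqm (Nprime N) (phi2' (x * y)%g) (phi2' x + phi2' y).
Proof. by move=> /inPhiN_val x1 /inPhiN_val y1; apply: Hphi2_hom. Qed.

Let phi2'AN : eqm (Nprime N) (phi2' (expgz Abar N)) 0.
Proof. by move: Hphi2_AN; rewrite -[Am]/(val Abar) -val_expgz. Qed.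

Let phi2'BN : eqm (Nprime N) (phi2' (expgz Bbar N)) 0.
Proof. by move: Hphi2_BN; rewrite -[Bm]/(val Bbar) -val_expgz. Qed.

Let phi2'C i j : eqm (Nprime N)
  (phi2' (expgz Abar i * expgz Bbar j * gcomm Abar Bbar * (expgz Bbar (- j) * expgz Abar (- i)))%g) 1.
Proof. by rewrite /= !val_expgz; apply: Hphi2_C. Qed.

Definition psibar (x : mat) : int * int * int :=
  if insub x is Some y then psib Abar Bbar psi' y else 0.

Let psibarE y : psibar (val y) = psib Abar Bbar psi' y.
Proof. by rewrite /psibar valK. Qed.

Lemma psibarM x y : PhiN N phi1 x -> PhiN N phi1 y ->
  eq3m (Nprime N) (psibar (gmul x y)) (add3 (psibar x) (psibar y)).
Proof.
move=> [/Gbar2P[{}x <-] x1] [/Gbar2P[{}y <-] y1].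
rewrite -val_mul !psibarE.
exact (psibM Gbar2_gen psi'M psi'_lcs3 Hpsi_C Hpsi_CA Hpsi_CB phi1'M Hphi1_A Hphi1_B x1 y1).
Qed.

Lemma psibar_Gamma2 x : Gamma 2 x -> eq3m (Nprime N) (psibar x) (psi x).
Proof.
by case/lcs_lcsg=> y <- y1; rewrite psibarE (psib_lcs1 Gbar2_gen).
Qed.

Lemma psibar_AN : eq3m (Nprime N) (psibar (gpow Am N)) (0, 0, 0).
Proof.
by rewrite -[Am]/(val Abar) -val_expgz psibarE (psib_expgz_a Gbar2_gen).
Qed.

Lemma psibar_BN : eq3m (Nprime N) (psibar (gpow Bm N)) (0, 0, 0).
Proof.
by rewrite -[Bm]/(val Bbar) -val_expgz psibarE (psib_expgz_b Gbar2_gen).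
Qed.

Lemma psibar_conj g d : inG g -> PhiN N phi1 d ->
  eq3m (Nprime N) (psibar (gmul (gmul g d) (ginv g)))
    (add3 (- ((phi1 g).1 * phi2 d), - ((phi1 g).2 * phi2 d), 0) (psibar d)).
Proof.
move=> /Gbar2P[{}g <-] [/Gbar2P[{}d <-] d1].
rewrite -val_inv -!val_mul !psibarE.
have -> : add3 (- ((phi1 (val g)).1 * phi2 (val d)), - ((phi1 (val g)).2 * phi2 (val d)), 0)
            (psib Abar Bbar psi' d) = psib Abar Bbar psi' d - pad (phi1' g) (phi2' d).
  by apply: int3_ext => /=; ring.
exact (psibJ Gbar2_gen psi'M psi'_lcs3 Hpsi_C Hpsi_CA Hpsi_CB phi1'M Hphi1_A Hphi1_B
  phi2'M phi2'AN phi2'BN phi2'C g d1).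
Qed.

Lemma psibar_conj_C i j k :
  eq3m (Nprime N)
    (psibar (gmul (gmul (gmul (gpow Am i) (gpow Bm j)) (gpow Cm k))
                  (gmul (gpow Bm (- j)) (gpow Am (- i)))))
    (- (i * k), - (j * k), k).
Proof.
rewrite -[Am]/(val Abar) -[Bm]/(val Bbar) -[Cm]/(val (gcomm Abar Bbar)) -!val_expgz.
by rewrite -!val_mul psibarE (psib_conj_expgz_C Gbar2_gen).
Qed.

End Proposition7.

Unset Implicit Arguments.

Theorem proposition7 (N : nat) (hN : (1 <= N)%N)
  (* psi : Gamma_2 -> Z^3, homomorphism with kernel Gamma_4, C |-> (0,0,1),
     [C,A] |-> (1,0,0), [C,B] |-> (0,1,0) *)
  (psi : mat -> int * int * int)
  (Hpsi_hom : forall x y, Gamma 2 x -> Gamma 2 y ->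
       psi (gmul x y) = add3 (psi x) (psi y))
  (Hpsi_ker : forall x, Gamma 2 x -> (psi x = (0, 0, 0) <-> Gamma 4 x))
  (Hpsi_C : psi Cm = (0, 0, 1))
  (Hpsi_CA : psi (comm Cm Am) = (1, 0, 0))
  (Hpsi_CB : psi (comm Cm Bm) = (0, 1, 0))
  (* phibar_1 : Gamma-bar(2) -> (Z/N)^2, A |-> (1,0), B |-> (0,1) *)
  (phi1 : mat -> int * int)
  (Hphi1_hom : forall x y, inG x -> inG y ->
       eq2m N (phi1 (gmul x y)) (add2 (phi1 x) (phi1 y)))
  (Hphi1_A : eq2m N (phi1 Am) (1, 0))
  (Hphi1_B : eq2m N (phi1 Bm) (0, 1))
  (* phibar_2 : Phi_N -> Z/N' *)
  (phi2 : mat -> int)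
  (Hphi2_hom : forall x y, PhiN N phi1 x -> PhiN N phi1 y ->
       eqm (Nprime N) (phi2 (gmul x y)) (phi2 x + phi2 y))
  (Hphi2_AN : eqm (Nprime N) (phi2 (gpow Am N%:Z)) 0)
  (Hphi2_BN : eqm (Nprime N) (phi2 (gpow Bm N%:Z)) 0)
  (Hphi2_C : forall i j : int,
       eqm (Nprime N)
         (phi2 (gmul (gmul (gmul (gpow Am i) (gpow Bm j)) Cm)
                     (gmul (gpow Bm (- j)) (gpow Am (- i))))) 1) :
  exists psib : mat -> int * int * int,
    (forall x y, PhiN N phi1 x -> PhiN N phi1 y ->
       eq3m (Nprime N) (psib (gmul x y)) (add3 (psib x) (psib y))) /\
    (forall x, Gamma 2 x -> eq3m (Nprime N) (psib x) (psi x)) /\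
    eq3m (Nprime N) (psib (gpow Am N%:Z)) (0, 0, 0) /\
    eq3m (Nprime N) (psib (gpow Bm N%:Z)) (0, 0, 0) /\
    (forall g d, inG g -> PhiN N phi1 d ->
       eq3m (Nprime N) (psib (gmul (gmul g d) (ginv g)))
         (add3 (- ((phi1 g).1 * phi2 d), - ((phi1 g).2 * phi2 d), 0) (psib d))) /\
    (forall i j k : int,
       eq3m (Nprime N)
         (psib (gmul (gmul (gmul (gpow Am i) (gpow Bm j)) (gpow Cm k))
                     (gmul (gpow Bm (- j)) (gpow Am (- i)))))
         (- (i * k), - (j * k), k)).
Proof.
exists (psibar psi); split; [|split; [|split; [|split; [|split]]]].
- by move=> x y; apply: psibarM.
- by move=> x; apply: psibar_Gamma2.
- exact: psibar_AN.
- exact: psibar_BN.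
- by move=> g d; apply: psibar_conj.
- by move=> i j k; apply: psibar_conj_C.
Qed.
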